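(* For every integer $n \ge 6$, $\gamma^{\rm ID}(K_n \times K_{2n-5}) = 2n-4$.
   Context: For a graph $G$ and vertex $x$, $N[x]$ denotes the closed neighborhood of $x$. A set $C \subseteq V(G)$ is an identifying code (ID code) of $G$ if $C$ is a dominating set of $G$ and $N[x]\cap C \ne N[y]\cap C$ for every pair of distinct vertices $x,y$. $\gamma^{\rm ID}(G)$ is the minimum cardinality of an ID code of $G$. The direct product $G_1\times G_2$ has vertex set $V(G_1)\times V(G_2)$, with $(u_1,u_2)$ adjacent to $(v_1,v_2)$ iff $u_1v_1\in E(G_1)$ and $u_2v_2 \in E(G_2)$. $K_n$ is the complete graph on vertex set $[n]=\{1,\dots,n\}$; thus in $K_n\times K_m$ two vertices are adjacent iff they differ in both coordinates. *)

From mathcomp Require Import all_boot.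
Set Implicit Arguments. Unset Strict Implicit. Unset Printing Implicit Defensive.

(* A simple graph is given by an adjacency relation e on a finite type T
   (assumed symmetric and irreflexive by the caller). *)

Definition closed_nbhd (T : finType) (e : rel T) (x : T) : {set T} :=
  [set y | (y == x) || e x y].

Definition is_idcode (T : finType) (e : rel T) (C : {set T}) : bool :=
  [forall x, closed_nbhd e x :&: C != set0] &&
  [forall x, forall y, (x != y) ==> (closed_nbhd e x :&: C != closed_nbhd e y :&: C)].

(* gamma^ID(G): minimum cardinality of an ID code
   (value #|T|.+1 if no ID code exists). *)
Definition gammaID (T : finType) (e : rel T) : nat :=
  \big[minn/#|T|.+1]_(C : {set T} | is_idcode e C) #|C|.

Definition Kn_rel (n : nat) : rel 'I_n := fun u v => u != v.
Arguments Kn_rel n : clear implicits.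

Definition direct_prod (T1 T2 : finType) (e1 : rel T1) (e2 : rel T2)
  : rel (T1 * T2)%type :=
  fun u v => e1 u.1 v.1 && e2 u.2 v.2.

Definition KxK (n m : nat) : rel ('I_n * 'I_m)%type :=
  direct_prod (Kn_rel n) (Kn_rel m).
Arguments KxK n m : clear implicits.

(* The vertices of K_n x K_m are the cells (i, j) of an n x m grid, and
   N[(i, j)] consists of (i, j) and of all cells outside row i and column j.
   Comparing the traces of two cells yields a characterisation of the
   identifying codes C (idcode_KxKP): C dominates, at most one row and at most
   one column miss C, and for i <> k, j <> l the "cross" formed by rows i, k
   and columns j, l meets C outside the box {i, k} x {j, l}.

   Lower bound (idcode_card_lower): if |C| <= m and m + 5 <= 2n, counting
   rows gives three rows with exactly one entry, and counting columns shows
   that at most one column has two entries (none has more), in which case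
   some column is empty.  Two of the three singleton rows then either share a
   column or lie in two distinct columns with one entry each; in both cases a
   cross lies inside its box.

   Upper bound (code_conditions, card_code): an explicit code with 2n - 4
   cells, made of the cells (c / 2, c) for c < m - 2 and of the last three
   cells of column m - 2. *)
From mathcomp Require Import all_boot zify.
Set Implicit Arguments. Unset Strict Implicit. Unset Printing Implicit Defensive.

Section Traces.
Variables n m : nat.
Notation T := ('I_n * 'I_m)%type.
Notation N := (closed_nbhd (KxK n m)).

Lemma mem_nbhd (x z : T) :
  (z \in N x) = (z == x) || (x.1 != z.1) && (x.2 != z.2).
Proof. by rewrite inE. Qed.

Lemma trace_neqE (C : {set T}) (x y : T) :
  (N x :&: C != N y :&: C) = [exists z in C, (z \in N x) != (z \in N y)].
Proof.
rewrite -negb_forall_in; congr (~~ _); apply/eqP/forall_inP => [eqNC z zC|same].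
  by move/setP: eqNC => /(_ z); rewrite !in_setI zC !andbT => ->.
apply/setP => z; rewrite !in_setI.
by case: (boolP (z \in C)) => [/same /eqP ->|]; rewrite ?andbT ?andbF.
Qed.

Lemma distinguish_same_row (i : 'I_n) (j l : 'I_m) (z : T) : j != l ->
  ((z \in N (i, j)) != (z \in N (i, l))) = (z.2 == j) || (z.2 == l).
Proof. by case: z => r c; rewrite !mem_nbhd /= !xpair_eqE -!val_eqE /=; lia. Qed.

Lemma distinguish_same_col (i k : 'I_n) (j : 'I_m) (z : T) : i != k ->
  ((z \in N (i, j)) != (z \in N (k, j))) = (z.1 == i) || (z.1 == k).
Proof. by case: z => r c; rewrite !mem_nbhd /= !xpair_eqE -!val_eqE /=; lia. Qed.

Lemma distinguish_cross (i k : 'I_n) (j l : 'I_m) (z : T) : i != k -> j != l ->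
  ((z \in N (i, j)) != (z \in N (k, l))) =
  (((z.1 == i) || (z.1 == k)) != ((z.2 == j) || (z.2 == l))).
Proof. by case: z => r c; rewrite !mem_nbhd /= !xpair_eqE -!val_eqE /=; lia. Qed.

(* Three code vertices in pairwise distinct rows and columns dominate the
   whole graph: any vertex shares a row or column with at most two of them. *)
Lemma dominating_of_three_rooks (C : {set T}) (x y z : T) :
  x \in C -> y \in C -> z \in C ->
  [&& x.1 != y.1, y.1 != z.1, z.1 != x.1, x.2 != y.2, y.2 != z.2 & z.2 != x.2] ->
  forall v, N v :&: C != set0.
Proof.
move=> xC yC zC rooks v; apply/set0Pn.
have : [|| (v.1 != x.1) && (v.2 != x.2), (v.1 != y.1) && (v.2 != y.2)
          | (v.1 != z.1) && (v.2 != z.2)].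
  by move: rooks; rewrite -!val_eqE /=; lia.
by case/or3P => sees; [exists x | exists y | exists z]; rewrite in_setI mem_nbhd sees orbT.
Qed.
End Traces.

Section Characterisation.
Variables n m : nat.
Notation T := ('I_n * 'I_m)%type.
Notation N := (closed_nbhd (KxK n m)).
Implicit Types (C : {set T}) (i k : 'I_n) (j l : 'I_m).

Definition row_of C i : {set 'I_m} := [set c | (i, c) \in C].
Definition col_of C j : {set 'I_n} := [set r | (r, j) \in C].

(* C meets the "cross" formed by rows i, k and columns j, l outside the box
   {i, k} x {j, l}. *)
Definition cross_separated C i k j l : bool :=
  [exists z in C, ((z.1 == i) || (z.1 == k)) != ((z.2 == j) || (z.2 == l))].

Definition KxK_code_conditions C : Prop :=
  [/\ forall x, N x :&: C != set0,
      forall i k, i != k -> (row_of C i != set0) || (row_of C k != set0),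
      forall j l, j != l -> (col_of C j != set0) || (col_of C l != set0)
    & forall i k j l, i != k -> j != l -> cross_separated C i k j l].

Lemma idcode_KxKP C : 0 < n -> 0 < m ->
  is_idcode (KxK n m) C <-> KxK_code_conditions C.
Proof.
move=> n_gt0 m_gt0; split => [code|[dom rows cols cross]].
  have sep x y : x != y -> [exists z in C, (z \in N x) != (z \in N y)].
    by rewrite -trace_neqE; case/andP: code => _ /forallP/(_ x)/forallP/(_ y)/implyP.
  split.
  - by case/andP: code => /forallP.
  - move=> i k ik; have /sep /exists_inP [[r c] rcC] : (i, Ordinal m_gt0) != (k, Ordinal m_gt0).
      by rewrite xpair_eqE negb_and ik.
    rewrite distinguish_same_col //= => /orP [] /eqP rE; apply/orP; [left|right];
      by apply/set0Pn; exists c; rewrite inE -rE.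
  - move=> j l jl; have /sep /exists_inP [[r c] rcC] : (Ordinal n_gt0, j) != (Ordinal n_gt0, l).
      by rewrite xpair_eqE negb_and jl orbT.
    rewrite distinguish_same_row //= => /orP [] /eqP cE; apply/orP; [left|right];
      by apply/set0Pn; exists r; rewrite inE -cE.
  - move=> i k j l ik jl; have /sep /exists_inP [z zC] : (i, j) != (k, l) by rewrite xpair_eqE negb_and ik.
    by rewrite distinguish_cross // => zsep; apply/exists_inP; exists z.
apply/andP; split; first exact/forallP.
apply/forallP => -[i j]; apply/forallP => -[k l]; apply/implyP => xy; rewrite trace_neqE.
case: (eqVneq i k) xy => [<-|ik] xy; case: (eqVneq j l) xy => [<-|jl] xy.
- by rewrite eqxx in xy.
- have /orP [] := cols j l jl => /set0Pn [r]; rewrite inE => rC; apply/exists_inP;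
    by eexists; first exact: rC; rewrite distinguish_same_row //= eqxx ?orbT.
- have /orP [] := rows i k ik => /set0Pn [c]; rewrite inE => cC; apply/exists_inP;
    by eexists; first exact: cC; rewrite distinguish_same_col //= eqxx ?orbT.
- have /exists_inP [z zC zsep] := cross i k j l ik jl.
  by apply/exists_inP; exists z; rewrite ?distinguish_cross.
Qed.
End Characterisation.

Section FamilyCounting.
Variables (I J : finType) (F : I -> {set J}).

Lemma card_set_sum (P : pred I) : #|[set i | P i]| = \sum_i P i.
Proof. by rewrite -sum1dep_card big_mkcond. Qed.

Lemma card_empty_le1 :
  (forall i k, i != k -> (F i != set0) || (F k != set0)) ->
  #|[set i | F i == set0]| <= 1.
Proof.
move=> one_empty; apply/card_le1_eqP => i k; rewrite !inE => /eqP Fi /eqP Fk.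
by have [//|/one_empty] := eqVneq i k; rewrite Fi Fk eqxx.
Qed.

Lemma sum_card_lower2 :
  2 * #|I| <= \sum_i #|F i| + #|[set i | #|F i| == 1]| + 2 * #|[set i | F i == set0]|.
Proof.
have -> : #|I| = \sum_(i : I) 1 by rewrite sum1_card.
rewrite !card_set_sum !big_distrr -!big_split /=.
by apply: leq_sum => i _; rewrite -cards_eq0; case: #|F i| => [|[|d]].
Qed.

Lemma sum_card_excess :
  #|I| + \sum_i (#|F i| - 1) <= \sum_i #|F i| + #|[set i | F i == set0]|.
Proof.
have -> : #|I| = \sum_(i : I) 1 by rewrite sum1_card.
rewrite !card_set_sum -!big_split /=.
by apply: leq_sum => i _; rewrite -cards_eq0; case: #|F i| => //= d; lia.
Qed.
End FamilyCounting.

Section RowsAndColumns.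
Variables (n m : nat) (C : {set 'I_n * 'I_m}).

Lemma card_rows : #|C| = \sum_i #|row_of C i|.
Proof.
have -> : #|C| = \sum_i \sum_c (((i, c) \in C) : nat).
  by rewrite pair_big -sum1_card big_mkcond; apply: eq_bigr => -[].
by apply: eq_bigr => i _; rewrite card_set_sum.
Qed.

Lemma card_cols : #|C| = \sum_j #|col_of C j|.
Proof.
rewrite card_rows; under eq_bigr do rewrite card_set_sum; rewrite exchange_big.
by apply: eq_bigr => j _; rewrite card_set_sum.
Qed.
End RowsAndColumns.

Lemma sub_set1_of_card_le1 (T : finType) (A : {set T}) (x : T) :
  x \in A -> #|A| <= 1 -> A \subset [set x].
Proof.
by move=> xA /card_le1_eqP A_le1; apply/subsetP => y yA; rewrite inE (A_le1 y x).
Qed.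

Section LowerBound.
Variables (n m : nat) (C : {set 'I_n * 'I_m}).
Local Notation col_size j := #|col_of C j|.

Hypothesis cross : forall i k j l, i != k -> j != l -> cross_separated C i k j l.
Hypothesis excess_le1 : \sum_j (col_size j - 1) <= 1.
Hypothesis excess_le_empty :
  \sum_j (col_size j - 1) <= #|[set j | col_of C j == set0]|.

Lemma col_pair_excess j l : j != l -> (col_size j - 1) + (col_size l - 1) <= 1.
Proof.
move=> jl; apply: leq_trans _ excess_le1.
by rewrite (bigD1 j) //= (bigD1 l) 1?eq_sym //= addnA leq_addr.
Qed.

Lemma col_size_le2 j : col_size j <= 2.
Proof. by have := excess_le1; rewrite (bigD1 j) //=; lia. Qed.

Lemma empty_col_exists j : 2 <= col_size j -> exists l, col_of C l = set0.
Proof.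
move=> big; have : 0 < #|[set j | col_of C j == set0]|.
  by apply: leq_trans _ excess_le_empty; rewrite (bigD1 j) //= addn_gt0 subn_gt0 big.
by case/card_gt0P => l; rewrite inE => /eqP; exists l.
Qed.

Lemma box_contra i k j l : i != k -> j != l ->
  row_of C i \subset [set j; l] -> row_of C k \subset [set j; l] ->
  col_of C j \subset [set i; k] -> col_of C l \subset [set i; k] -> False.
Proof.
move=> ik jl /subsetP rowi /subsetP rowk /subsetP colj /subsetP coll.
have /exists_inP [[r c] rcC /=] := cross ik jl.
have [rik|rik] := boolP ((r == i) || (r == k)).
  suff : c \in [set j; l] by rewrite !inE => ->.
  by move: rik => /orP [] /eqP rE; [apply: rowi|apply: rowk]; rewrite inE -rE.
rewrite /= negbK => cjl; suff : r \in [set i; k] by rewrite !inE (negbTE rik).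
by move: cjl => /orP [] /eqP cE; [apply: colj|apply: coll]; rewrite inE -cE.
Qed.

(* Two singleton rows in the same column contradict separation: that column
   then holds exactly these two entries, and some other column is empty. *)
Lemma shared_column_contra a b j :
  a != b -> row_of C a = [set j] -> row_of C b = [set j] -> False.
Proof.
move=> ab rowa rowb.
have colj : col_of C j = [set a; b].
  apply/eqP; rewrite eq_sym eqEcard cards2 ab (col_size_le2 j) andbT.
  have in_colj r : row_of C r = [set j] -> (r, j) \in C.
    by move/setP/(_ j); rewrite !inE eqxx.
  by apply/subsetP => r; rewrite !inE => /orP [] /eqP ->; apply: in_colj.
have [l coll] : exists l, col_of C l = set0 by apply: (@empty_col_exists j); rewrite colj cards2 ab.
have jl : j != l.
  by apply: contra_eq_neq coll => <-; rewrite colj; apply/set0Pn; exists a; rewrite !inE eqxx.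
apply: (box_contra ab jl); rewrite ?rowa ?rowb ?colj ?coll ?sub0set ?subxx //;
  by rewrite sub1set !inE eqxx.
Qed.

Lemma distinct_columns_contra a b j l : a != b -> j != l ->
  row_of C a = [set j] -> row_of C b = [set l] ->
  col_size j <= 1 -> col_size l <= 1 -> False.
Proof.
move=> ab jl rowa rowb colj coll.
have in_col r c : row_of C r = [set c] -> r \in col_of C c.
  by move/setP/(_ c); rewrite !inE eqxx.
have sub_ab r c : r \in [set a; b] -> row_of C r = [set c] -> col_size c <= 1 ->
    col_of C c \subset [set a; b].
  move=> rab rowr colc; apply: subset_trans (sub_set1_of_card_le1 (in_col r c rowr) colc) _.
  by rewrite sub1set.
apply: (box_contra ab jl); rewrite ?rowa ?rowb ?sub1set ?inE ?eqxx ?orbT //.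
  by apply: (sub_ab a); rewrite ?inE ?eqxx.
by apply: (sub_ab b); rewrite ?inE ?eqxx ?orbT.
Qed.

(* Three singleton rows are impossible: either two share a column, or, as at
   most one column has two entries, two of them sit in distinct columns of
   size at most one. *)
Lemma three_singleton_rows_contra a b c ja jb jc :
  [&& a != b, b != c & c != a] ->
  row_of C a = [set ja] -> row_of C b = [set jb] -> row_of C c = [set jc] -> False.
Proof.
case/and3P => ab bc ca rowa rowb rowc.
have [jab|nab] := eqVneq ja jb; first by apply: (shared_column_contra ab rowa); rewrite jab.
have [jbc|nbc] := eqVneq jb jc; first by apply: (shared_column_contra bc rowb); rewrite jbc.
have [jca|nca] := eqVneq jc ja; first by apply: (shared_column_contra ca rowc); rewrite jca.
have eab := col_pair_excess nab; have ebc := col_pair_excess nbc.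
have eca := col_pair_excess nca.
have : [|| (col_size ja <= 1) && (col_size jb <= 1), (col_size jb <= 1) && (col_size jc <= 1)
          | (col_size jc <= 1) && (col_size ja <= 1)] by lia.
case/or3P => /andP [s1 s2].
- exact: (distinct_columns_contra ab nab rowa rowb).
- exact: (distinct_columns_contra bc nbc rowb rowc).
- exact: (distinct_columns_contra ca nca rowc rowa).
Qed.
End LowerBound.

(* A code with at most m vertices would have at least
   three singleton rows (counting rows) and nearly all columns of size one
   (counting columns), which is impossible by the lemmas above. *)
Lemma idcode_card_lower n m (C : {set 'I_n * 'I_m}) :
  0 < m -> m + 5 <= 2 * n -> is_idcode (KxK n m) C -> m < #|C|.
Proof.
move=> m_gt0 mn code; rewrite ltnNge; apply/negP => small.
have n_gt0 : 0 < n by lia.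
have [_ rows cols cross] := (idcode_KxKP C n_gt0 m_gt0).1 code.
have empty_rows := card_empty_le1 rows; have empty_cols := card_empty_le1 cols.
have /card_gt2P [a [b [c [[sa sb sc] distinct]]]] : 2 < #|[set i | #|row_of C i| == 1]|.
  by have := sum_card_lower2 (row_of C); rewrite -card_rows card_ord; lia.
move: sa sb sc; rewrite !inE => /cards1P [ja rowa] /cards1P [jb rowb] /cards1P [jc rowc].
have := sum_card_excess (col_of C); rewrite -card_cols card_ord => excess.
apply: (three_singleton_rows_contra cross _ _ _ rowa rowb rowc); [lia|lia|exact/and3P].
Qed.

Section Construction.
Variables n m : nat.
Hypothesis m_def : m + 5 = 2 * n.
Hypothesis n_ge6 : 6 <= n.

(* The optimal code: for c < m - 2 the entry (c / 2, c), so that rows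
   0 .. n - 5 get two consecutive columns and row n - 4 gets column m - 3;
   column m - 2 holds the last three rows, and column m - 1 stays empty. *)
Definition in_code (r c : nat) : bool :=
  ((c < m - 2) && (c./2 == r)) || ((c == m - 2) && (n - 3 <= r)).

Definition code : {set 'I_n * 'I_m} := [set z : 'I_n * 'I_m | in_code z.1 z.2].

Lemma code_row r : r < n -> exists2 c, c < m & in_code r c.
Proof.
rewrite /in_code => hr; have [low|high] := leqP (r + 4) n.
  by exists r.*2; lia.
by exists (m - 2); lia.
Qed.

Lemma code_col c : c < m - 1 -> exists2 r, r < n & in_code r c.
Proof.
rewrite /in_code => hc; have [low|high] := ltnP c (m - 2).
  by exists c./2; lia.
by exists (n - 3); lia.
Qed.

(* Column m - 2 has three entries, so if it is
   one of j, l an entry escapes rows i, k; a row in the last three has its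
   entry in column m - 2; otherwise rows i, k hold (i, 2i) and (k, 2k), and
   if neither escapes then {j, l} = {2i, 2k} while (i, 2i+1) or (k, 2k+1)
   is an entry (not both rows can be row n - 4). *)
Lemma code_cross i k j l : i < n -> k < n -> j < m -> l < m -> i != k -> j != l ->
  exists r c, [/\ r < n, c < m, in_code r c &
                  ((r == i) || (r == k)) != ((c == j) || (c == l))].
Proof.
rewrite /in_code => hi hk hj hl ik jl.
have [last|not_last] := boolP ((j == m - 2) || (l == m - 2)).
  have [r [hr ri rk]] : exists r, [/\ n - 3 <= r < n, r != i & r != k].
    have [free3|taken3] := boolP ((n - 3 != i) && (n - 3 != k)).
      by exists (n - 3); split; lia.
    have [free2|taken2] := boolP ((n - 2 != i) && (n - 2 != k)).
      by exists (n - 2); split; lia.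
    by exists (n - 1); split; lia.
  by exists r, (m - 2); split; lia.
have [hi3|hi3] := leqP (n - 3) i; first by exists i, (m - 2); split; lia.
have [hk3|hk3] := leqP (n - 3) k; first by exists k, (m - 2); split; lia.
have [esc_i|hit_i] := boolP ((i.*2 != j) && (i.*2 != l)).
  by exists i, i.*2; split; lia.
have [esc_k|hit_k] := boolP ((k.*2 != j) && (k.*2 != l)).
  by exists k, k.*2; split; lia.
have [i_two|i_one] := leqP (i + 5) n; first by exists i, i.*2.+1; split; lia.
by exists k, k.*2.+1; split; lia.
Qed.

(* Domination comes from the cells (0, 0), (1, 2), (2, 4). *)
Lemma code_conditions : KxK_code_conditions code.
Proof.
split.
- have [r0 r1 r2] : [/\ 0 < n, 1 < n & 2 < n] by split; lia.
  have [c0 c2 c4] : [/\ 0 < m, 2 < m & 4 < m] by split; lia.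
  apply: (@dominating_of_three_rooks _ _ _ (Ordinal r0, Ordinal c0)
            (Ordinal r1, Ordinal c2) (Ordinal r2, Ordinal c4));
    by rewrite ?inE /in_code /=; lia.
- move=> i k _; apply/orP; left; have [c hc ic] := code_row (ltn_ord i).
  by apply/set0Pn; exists (Ordinal hc); rewrite !inE.
- move=> j l jl; have col_ne (c : 'I_m) : c < m - 1 -> col_of code c != set0.
    by case/code_col => r hr rc; apply/set0Pn; exists (Ordinal hr); rewrite !inE.
  have [j_low|j_last] := boolP (j < m - 1); first by rewrite col_ne.
  rewrite (col_ne l) ?orbT //.
  by move: jl j_last (ltn_ord j) (ltn_ord l); rewrite -val_eqE /=; lia.
- move=> i k j l ik jl; move: (ik) (jl); rewrite -!val_eqE => ik' jl'.
  have [r [c [hr hc rc sep]]] := code_cross (ltn_ord i) (ltn_ord k) (ltn_ord j) (ltn_ord l) ik' jl'.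
  by apply/exists_inP; exists (Ordinal hr, Ordinal hc); rewrite ?inE // -!val_eqE.
Qed.

Lemma card_code : #|code| <= m.+1.
Proof.
pose f (z : 'I_n * 'I_m) : 'I_m.+1 := inord (z.2 + (z.1 - (n - 3))).
rewrite -[m.+1]card_ord; apply: (@leq_card_in _ _ f).
move=> [i j] [k l]; rewrite !inE /f /in_code /= => iC kC /(congr1 (@nat_of_ord _)).
have := ltn_ord i; have := ltn_ord j; have := ltn_ord k; have := ltn_ord l.
move=> hl hk hj hi; rewrite !inordK => [fE||]; try lia.
by congr pair; apply: ord_inj; lia.
Qed.
End Construction.

Lemma bigmin_le (I : finType) (P : pred I) (F : I -> nat) (x0 : nat) (i : I) :
  P i -> \big[minn/x0]_(j | P j) F j <= F i.
Proof.
rewrite unlock => Pi; elim: (index_enum I) (mem_index_enum i) => //= a s IH.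
rewrite in_cons => /orP [/eqP <-|/IH le_i]; first by rewrite Pi geq_minl.
by case: (P a) => //; apply: leq_trans (geq_minr _ _) le_i.
Qed.

Lemma gammaID_le (T : finType) (e : rel T) (C : {set T}) :
  is_idcode e C -> gammaID e <= #|C|.
Proof. exact: bigmin_le. Qed.

Lemma gammaID_ge (T : finType) (e : rel T) (k : nat) :
  k <= #|T|.+1 -> (forall C, is_idcode e C -> k <= #|C|) -> k <= gammaID e.
Proof.
move=> k_le lower; apply: (big_ind (fun x => k <= x)) => // x y kx ky.
by rewrite leq_min kx ky.
Qed.

Theorem theorem4 (n : nat) (hn : 6 <= n) :
  gammaID (KxK n (2 * n - 5)%N) = (2 * n - 4)%N.
Proof.
have m_def : (2 * n - 5) + 5 = 2 * n by lia.
have -> : (2 * n - 4 = (2 * n - 5).+1)%N by lia.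
have code_ok : is_idcode (KxK n (2 * n - 5)) (code n (2 * n - 5)).
  by apply/idcode_KxKP; [lia|lia|apply: code_conditions].
apply/eqP; rewrite eqn_leq; apply/andP; split.
  exact: leq_trans (gammaID_le code_ok) (card_code m_def hn).
apply: gammaID_ge => [|C C_ok]; first by rewrite card_prod !card_ord; nia.
by apply: idcode_card_lower C_ok; lia.
Qed.
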